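(* If $2\le n\le 3$, then $\mathrm{A}=\mathrm{Q}=\mathrm{P}=\mathrm{Z}^\times(\mathrm{C}^{\times(0)}\cup\mathrm{C}^{\times(1)})$. If $n=4$, then $\mathrm{Q}\neq\mathrm{A}$.
   Context: Let $\mathrm{C}$ be either the real Clifford algebra $C\ell_{p,q}$ with $p+q=n$, or the complex Clifford algebra $C\ell(\mathbb{C}^n)$. It has identity $e$ and generators $e_1,\dots,e_n$ satisfying $e_ae_b+e_be_a=2\eta_{ab}e$. In the real case $\eta=\mathrm{diag}(1,\dots,1,-1,\dots,-1)$ with $p$ entries $+1$ and $q$ entries $-1$. In the complex case $\eta=I_n$. $\mathrm{C}^k$ is the grade-$k$ subspace, spanned by the products $e_{a_1}\cdots e_{a_k}$ with $a_1<\dots<a_k$. The even subspace is $\mathrm{C}^{(0)}=\bigoplus_{k\text{ even}}\mathrm{C}^k$ and the odd subspace is $\mathrm{C}^{(1)}=\bigoplus_{k\text{ odd}}\mathrm{C}^k$. The reversion $U\mapsto\tilde U$ is the linear anti-automorphism acting on $\mathrm{C}^k$ as $(-1)^{k(k-1)/2}$. For $S\subseteq\mathrm{C}$, $S^\times$ is the set of elements of $S$ invertible in $\mathrm{C}$, and $\mathrm{C}^{\times(j)}:=(\mathrm{C}^{(j)})^\times$. $\mathrm{Z}$ is the center: $\mathrm{Z}=\mathrm{C}^0$ for $n$ even and $\mathrm{Z}=\mathrm{C}^0\oplus\mathrm{C}^n$ for $n$ odd. Define: <ul> <li>$\mathrm{P}:=\mathrm{Z}^\times(\mathrm{C}^{\times(0)}\cup\mathrm{C}^{\times(1)})=\{WT: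 W\in\mathrm{Z}^\times, T\in\mathrm{C}^{\times(0)}\cup\mathrm{C}^{\times(1)}\}$;</li> <li>$\mathrm{A}:=\{T\in\mathrm{C}^\times:\tilde TT\in\mathrm{Z}^\times\}$;</li> <li>$\mathrm{Q}:=\{T\in\mathrm{P}:\tilde TT\in\mathrm{Z}^\times\}$.</li> </ul> *)

From mathcomp Require Import all_boot all_algebra.
From mathcomp Require Import reals complex.
Set Implicit Arguments. Unset Strict Implicit. Unset Printing Implicit Defensive.
Import GRing.Theory.
Local Open Scope ring_scope.

Section Clifford.
Variables (F : fieldType) (n : nat) (eta : 'I_n -> F).

(* An element of the Clifford algebra with diagonal metric eta is given by its
   coordinates U A on the basis blades e_A = e_{a_1} ... e_{a_k}
   (A = {a_1 < ... < a_k} a subset of {0,..,n-1}). *)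
Definition clif := {ffun {set 'I_n} -> F}.

(* number of pairs (a,b), a in A, b in B, b < a (reordering sign) *)
Definition inv_count (A B : {set 'I_n}) : nat :=
  #|[set ab : 'I_n * 'I_n | [&& ab.1 \in A, ab.2 \in B & (ab.2 < ab.1)%N]]|.

(* e_A e_B = blade_coef A B * e_(A symdiff B) *)
Definition blade_coef (A B : {set 'I_n}) : F :=
  (-1) ^+ inv_count A B * \prod_(i in A :&: B) eta i.

Definition symd (A B : {set 'I_n}) : {set 'I_n} := (A :\: B) :|: (B :\: A).

Definition cmul (U V : clif) : clif :=
  [ffun C : {set 'I_n} => \sum_(A : {set 'I_n}) \sum_(B : {set 'I_n} | symd A B == C)
               U A * V B * blade_coef A B].

Definition cone : clif := [ffun A : {set 'I_n} => (A == set0)%:R].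

Definition cinvertible (U : clif) : Prop :=
  exists V : clif, cmul U V = cone /\ cmul V U = cone.

Definition even_elt (U : clif) : Prop := forall A : {set 'I_n}, odd #|A| -> U A = 0.
Definition odd_elt (U : clif) : Prop := forall A : {set 'I_n}, ~~ odd #|A| -> U A = 0.

Definition crev (U : clif) : clif :=
  [ffun A : {set 'I_n} => (-1) ^+ ((#|A| * (#|A| - 1)) %/ 2) * U A].

Definition in_center (U : clif) : Prop :=
  if odd n then forall A : {set 'I_n}, A != set0 -> A != setT -> U A = 0
  else forall A : {set 'I_n}, A != set0 -> U A = 0.

Definition center_unit (U : clif) : Prop := in_center U /\ cinvertible U.

Definition inP (T : clif) : Prop :=
  exists W S : clif, center_unit W /\ cinvertible S /\
    (even_elt S \/ odd_elt S) /\ T = cmul W S.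

Definition inA (T : clif) : Prop :=
  cinvertible T /\ center_unit (cmul (crev T) T).

Definition inQ (T : clif) : Prop :=
  inP T /\ center_unit (cmul (crev T) T).

End Clifford.

Definition eta_pq (R : realType) (p q : nat) : 'I_(p + q) -> R :=
  fun i => if (i < p)%N then 1 else -1.

Definition eta_C (R : realType) (n : nat) : 'I_n -> R[i] := fun _ => 1.

Arguments eta_pq R p q : clear implicits.
Arguments eta_C R n : clear implicits.

(* The heart of the argument writes T = E + O (even and odd parts);
   the hypothesis that rev(T) T is central forces rev(E) O to be a pseudoscalar, so that T is
   a central multiple of E or of O. *)

From HB Require Import structures.
From mathcomp Require Import all_boot all_algebra.
From mathcomp Require Import reals complex.
From mathcomp Require Import ring zify.
Set Implicit Arguments. Unset Strict Implicit. Unset Printing Implicit Defensive.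
Import GRing.Theory Num.Theory.
Local Open Scope ring_scope.

#[warnings="-redundant-canonical-projection"]
HB.instance Definition _ (F : fieldType) (n : nat) :=
  GRing.Lmodule.copy (clif F n) {ffun {set 'I_n} -> F^o}.

Lemma scaleE (F : fieldType) (a x : F) : a *: (x : F^o) = a * x.
Proof. by []. Qed.

Section CliffordAlgebra.
Variables (F : fieldType) (n : nat) (eta : 'I_n -> F).
Implicit Types (U V W X Y : clif F n) (A B C : {set 'I_n}).
Local Notation "U ** V" := (cmul eta U V) (at level 40, left associativity).
Local Notation one := (@cone F n).

Lemma clifDE U V A : (U + V) A = U A + V A.
Proof. by rewrite ffunE. Qed.

Lemma clifZE a U A : (a *: U) A = a * U A.
Proof. by rewrite ffunE. Qed.

Lemma symdK A B : symd A (symd A B) = B.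
Proof. by apply/setP => i; rewrite /symd !inE; case: (i \in A); case: (i \in B). Qed.

Lemma symd0 A : symd set0 A = A.
Proof. by apply/setP => i; rewrite /symd !inE; case: (i \in A). Qed.

Lemma symd0r A : symd A set0 = A.
Proof. by apply/setP => i; rewrite /symd !inE; case: (i \in A). Qed.

Lemma symdd A : symd A A = set0.
Proof. by apply/setP => i; rewrite /symd !inE; case: (i \in A). Qed.

Lemma in_symd A B i : (i \in symd A B) = (i \in A) (+) (i \in B).
Proof. by rewrite /symd !inE; case: (i \in A); case: (i \in B). Qed.

Lemma odd_symd A B : odd #|symd A B| = odd #|A| (+) odd #|B|.
Proof.
have -> : #|symd A B| = (#|A :\: B| + #|B :\: A|)%N.
  rewrite /symd cardsU; suff -> : (A :\: B) :&: (B :\: A) = set0 by rewrite cards0 subn0.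
  by apply/setP => i; rewrite !inE; case: (i \in A); case: (i \in B).
rewrite -(cardsID B A) -(cardsID A B) setIC !oddD.
by case: (odd #|_|); case: (odd #|_|); case: (odd #|_|).
Qed.

Lemma inv_countE A B :
  inv_count A B = (\sum_(a < n) \sum_(b < n) [&& a \in A, b \in B & (b < a)%N])%N.
Proof.
rewrite /inv_count -sum1_card big_mkcond /= pair_bigA /=.
by apply: eq_bigr => ab _; rewrite inE; case: [&& _, _ & _].
Qed.

Lemma prod_metricE A B :
  \prod_(i in A :&: B) eta i = \prod_(i < n) (if (i \in A) && (i \in B) then eta i else 1).
Proof. by rewrite big_mkcond; apply: eq_bigr => i _; rewrite inE. Qed.

Lemma blade_coefE A B : blade_coef eta A B =
  \prod_(a < n) \prod_(b < n) (-1) ^+ [&& a \in A, b \in B & (b < a)%N] *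
  \prod_(i < n) (if (i \in A) && (i \in B) then eta i else 1).
Proof.
rewrite /blade_coef inv_countE prod_metricE expr_sum.
by congr (_ * _); apply: eq_bigr => a _; rewrite expr_sum.
Qed.

(* The cocycle identity e_A (e_B e_C) = (e_A e_B) e_C at the level of structure constants:
   both the reordering sign and the metric factor match pair by pair. *)
Lemma blade_coef_cocycle A B C :
  blade_coef eta A B * blade_coef eta (symd A B) C =
  blade_coef eta A (symd B C) * blade_coef eta B C.
Proof.
rewrite !blade_coefE mulrACA [RHS]mulrACA -!big_split /=.
apply: eq_bigr => a _; congr (_ * _); last first.
  by rewrite !in_symd; case: (a \in A); case: (a \in B); case: (a \in C); rewrite /= ?mulr1 ?mul1r.
rewrite -!big_split /=; apply: eq_bigr => b _; rewrite -!signr_addb !in_symd.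
by case: (a \in A); case: (a \in B); case: (b \in B); case: (b \in C); case: (b < a)%N.
Qed.

Lemma cmulE U V C :
  (U ** V) C = \sum_A U A * V (symd A C) * blade_coef eta A (symd A C).
Proof.
rewrite ffunE; apply: eq_bigr => A _.
by rewrite (big_pred1 (symd A C)) // => B /=; apply/eqP/eqP => [<-|->]; rewrite symdK.
Qed.

Lemma blade_coef0l C : blade_coef eta set0 C = 1.
Proof.
rewrite /blade_coef /inv_count (_ : [set _ | _] = set0) ?cards0 ?set0I ?big_set0 ?mulr1 //.
by apply/setP => ab; rewrite !inE.
Qed.

Lemma blade_coef0r C : blade_coef eta C set0 = 1.
Proof.
rewrite /blade_coef /inv_count (_ : [set _ | _] = set0) ?cards0 ?setI0 ?big_set0 ?mulr1 //.
by apply/setP => ab; rewrite !inE andbF.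
Qed.

Lemma cmulDl U1 U2 V : (U1 + U2) ** V = U1 ** V + U2 ** V.
Proof.
apply/ffunP => C; rewrite [RHS]ffunE !cmulE -big_split; apply: eq_bigr => A _.
by rewrite ffunE !mulrDl.
Qed.

Lemma cmulDr U V1 V2 : U ** (V1 + V2) = U ** V1 + U ** V2.
Proof.
apply/ffunP => C; rewrite [RHS]ffunE !cmulE -big_split; apply: eq_bigr => A _.
by rewrite ffunE mulrDr !mulrDl.
Qed.

Lemma cmulZl a U V : (a *: U) ** V = a *: (U ** V).
Proof.
apply/ffunP => C; rewrite [RHS]ffunE !cmulE scaler_sumr; apply: eq_bigr => A _.
by rewrite ffunE !scaleE; ring.
Qed.

Lemma cmulZr a U V : U ** (a *: V) = a *: (U ** V).
Proof.
apply/ffunP => C; rewrite [RHS]ffunE !cmulE scaler_sumr; apply: eq_bigr => A _.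
by rewrite ffunE !scaleE; ring.
Qed.

Definition blade B : clif F n := [ffun A => (A == B)%:R].

Lemma bladeE B A : blade B A = (A == B)%:R.
Proof. by rewrite ffunE. Qed.

Lemma cone_blade : one = blade set0.
Proof. by []. Qed.

Definition sc a : clif F n := a *: one.

Lemma scE a A : sc a A = if A == set0 then a else 0.
Proof. by rewrite !ffunE scaleE; case: (A == set0); rewrite ?mulr1 ?mulr0. Qed.

Lemma cone_sc : one = sc 1.
Proof. by rewrite /sc scale1r. Qed.

Lemma cmul_scl a V : sc a ** V = a *: V.
Proof.
apply/ffunP => C; rewrite cmulE (bigD1 set0) //= big1 => [|A HA]; last first.
  by rewrite scE (negbTE HA) !mul0r.
by rewrite scE eqxx symd0 blade_coef0l mulr1 addr0 [RHS]ffunE.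
Qed.

Lemma cmul_scr a U : U ** sc a = a *: U.
Proof.
apply/ffunP => C; rewrite cmulE (bigD1 C) //= big1 => [|A HA]; last first.
  rewrite scE ifF ?mulr0 ?mul0r //; apply: contraNF HA => /eqP HAC.
  by rewrite -(symdK A C) HAC symd0r.
by rewrite scE symdd eqxx blade_coef0r mulr1 addr0 [RHS]ffunE scaleE mulrC.
Qed.

Lemma cmul1l V : one ** V = V.
Proof. by rewrite cone_sc cmul_scl scale1r. Qed.

Lemma cmul1r U : U ** one = U.
Proof. by rewrite cone_sc cmul_scr scale1r. Qed.

Lemma cmul0l V : 0 ** V = 0.
Proof. by rewrite -[X in X ** _](scale0r one) cmulZl scale0r. Qed.

Lemma cone_neq0 : one != 0 :> clif F n.
Proof. by apply/eqP => /ffunP /(_ set0); rewrite !ffunE eqxx => /eqP; rewrite oner_eq0. Qed.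

Lemma cmulA U V W : U ** V ** W = U ** (V ** W).
Proof.
apply/ffunP => D; rewrite !cmulE.
under eq_bigr => C _ do rewrite cmulE mulr_suml mulr_suml.
rewrite exchange_big /=; apply: eq_bigr => A _.
rewrite cmulE mulr_sumr mulr_suml (reindex_inj (can_inj (symdK A))) /=.
apply: eq_bigr => B _; rewrite symdK.
have -> : symd (symd A B) D = symd B (symd A D).
  by apply/setP => i; rewrite !in_symd; case: (i \in A); case: (i \in B); case: (i \in D).
have := blade_coef_cocycle A B (symd B (symd A D)); rewrite symdK => cocycle.
transitivity (U A * V B * W (symd B (symd A D)) *
  (blade_coef eta A B * blade_coef eta (symd A B) (symd B (symd A D)))); first ring.
by rewrite cocycle; ring.
Qed.

Lemma cmul_blade A B : blade A ** blade B = blade_coef eta A B *: blade (symd A B).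
Proof.
apply/ffunP => C; rewrite cmulE (bigD1 A) //= big1 => [|D DA]; last first.
  by rewrite bladeE (negbTE DA) !mul0r.
rewrite addr0 !bladeE eqxx mul1r clifZE bladeE.
have [->|CAB] := eqVneq C (symd A B); first by rewrite symdK eqxx mulr1 mul1r.
by rewrite (_ : (symd A C == B) = false) ?mul0r ?mulr0 //; apply: contraNF CAB => /eqP <-; rewrite symdK.
Qed.

Lemma crevE U A : crev U A = (-1) ^+ ((#|A| * (#|A| - 1)) %/ 2) * U A.
Proof. by rewrite ffunE. Qed.

Lemma crevD U V : crev (U + V) = crev U + crev V.
Proof. by apply/ffunP => A; rewrite !ffunE mulrDr. Qed.

Lemma crevZ a U : crev (a *: U) = a *: crev U.
Proof. by apply/ffunP => A; rewrite !ffunE !scaleE mulrCA. Qed.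

Lemma crev0 : crev 0 = 0 :> clif F n.
Proof. by apply/ffunP => A; rewrite !ffunE mulr0. Qed.

Lemma crevK U : crev (crev U) = U.
Proof. by apply/ffunP => A; rewrite !ffunE mulrA -expr2 sqrr_sign mul1r. Qed.

Lemma crev_blade A : crev (blade A) = (-1) ^+ ((#|A| * (#|A| - 1)) %/ 2) *: blade A.
Proof. by apply/ffunP => B; rewrite crevE clifZE !bladeE; case: eqP => [->|]; rewrite ?mulr0. Qed.

Lemma crev_sc a : crev (sc a) = sc a.
Proof.
by apply/ffunP => A; rewrite crevE !scE; case: eqP => [->|_]; rewrite ?cards0 ?mul1r ?mulr0.
Qed.

Definition rev_norm U : F := (crev U ** U) set0.

Definition homogeneous U : Prop := even_elt U \/ odd_elt U.

Definition even_part U : clif F n := [ffun A : {set 'I_n} => if odd #|A| then 0 else U A].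
Definition odd_part U : clif F n := [ffun A : {set 'I_n} => if odd #|A| then U A else 0].

Lemma even_odd_split U : U = even_part U + odd_part U.
Proof. by apply/ffunP => A; rewrite !ffunE; case: ifP; rewrite ?add0r ?addr0. Qed.

Lemma even_partE U A : even_part U A = if odd #|A| then 0 else U A.
Proof. by rewrite ffunE. Qed.

Lemma odd_partE U A : odd_part U A = if odd #|A| then U A else 0.
Proof. by rewrite ffunE. Qed.

Lemma even_part_id U : even_elt U -> even_part U = U.
Proof. by move=> HU; apply/ffunP => A; rewrite even_partE; case: ifP => // /HU ->. Qed.

Lemma odd_part_id U : odd_elt U -> odd_part U = U.
Proof. by move=> HU; apply/ffunP => A; rewrite odd_partE; case: ifP => // /negbT /HU ->. Qed.

Lemma even_part_even U : even_elt (even_part U).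
Proof. by move=> A HA; rewrite ffunE HA. Qed.

Lemma odd_part_odd U : odd_elt (odd_part U).
Proof. by move=> A HA; rewrite ffunE (negbTE HA). Qed.

Lemma crev_even U : even_elt U -> even_elt (crev U).
Proof. by move=> HU A HA; rewrite crevE HU ?mulr0. Qed.

(* Since e_A e_B is a multiple of e_(A symd B), the product respects the grading. *)
Lemma cmul_even_odd U V : even_elt U -> odd_elt V -> odd_elt (U ** V).
Proof.
move=> HU HV C HC; rewrite cmulE big1 // => A _.
have [HA|HA] := boolP (odd #|A|); first by rewrite HU // !mul0r.
by rewrite HV ?mulr0 ?mul0r // odd_symd (negbTE HA) (negbTE HC).
Qed.

Definition central_blade A : bool := (A == set0) || odd n && (A == setT).

Lemma in_centerP U : in_center U <-> (forall A, ~~ central_blade A -> U A = 0).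
Proof.
rewrite /in_center /central_blade; case: (odd n) => /=; split => H A.
- by rewrite negb_or => /andP [? ?]; apply: H.
- by move=> ? ?; apply: H; rewrite negb_or; apply/andP.
- by rewrite orbF; apply: H.
- by move=> ?; apply: H; rewrite orbF.
Qed.

Lemma center_sc a : in_center (sc a).
Proof. by apply/in_centerP => A; rewrite scE /central_blade negb_or => /andP [/negbTE ->]. Qed.

Lemma center_cone : in_center one.
Proof. by rewrite cone_sc; apply: center_sc. Qed.

Lemma center_add U V : in_center U -> in_center V -> in_center (U + V).
Proof.
by move=> /in_centerP HU /in_centerP HV; apply/in_centerP => A HA; rewrite ffunE HU ?HV ?addr0.
Qed.

Lemma center_scale a U : in_center U -> in_center (a *: U).
Proof. by move=> /in_centerP HU; apply/in_centerP => A HA; rewrite ffunE HU ?scaleE ?mulr0. Qed.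

Lemma center_crev U : in_center U -> in_center (crev U).
Proof. by move=> /in_centerP HU; apply/in_centerP => A HA; rewrite crevE HU ?mulr0. Qed.

(* In even dimension the center consists of the scalars, so it is closed under
   products and commutes with everything. *)
Lemma center_even_dim U : ~~ odd n -> in_center U -> U = sc (U set0).
Proof.
move=> n_even /in_centerP HU; apply/ffunP => A; rewrite scE.
case: eqP => [->|/eqP A0] //; apply: HU.
by rewrite /central_blade (negbTE A0) (negbTE n_even).
Qed.

Lemma center_comm_even_dim W U : ~~ odd n -> in_center W -> W ** U = U ** W.
Proof. by move=> n_even /(center_even_dim n_even) ->; rewrite cmul_scl cmul_scr. Qed.

Lemma center_mul_even_dim W V :
  ~~ odd n -> in_center W -> in_center V -> in_center (W ** V).
Proof. by move=> n_even /(center_even_dim n_even) ->; rewrite cmul_scl; apply: center_scale. Qed.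

Lemma center_pseudoscalar : odd n -> in_center (blade setT).
Proof.
move=> n_odd; apply/in_centerP => A; rewrite bladeE /central_blade n_odd negb_or /=.
by case/andP => _ /negbTE ->.
Qed.

Lemma center_odd_dim U : odd n -> in_center U -> U = sc (U set0) + U setT *: blade setT.
Proof.
move=> n_odd /in_centerP HU; apply/ffunP => A; rewrite clifDE scE clifZE bladeE.
have T0 : setT != set0 :> {set 'I_n} by rewrite -card_gt0 cardsT card_ord; case: n n_odd.
have [->|A0] := eqVneq A set0; first by rewrite eq_sym (negbTE T0) mulr0 addr0.
have [->|AT] := eqVneq A setT; first by rewrite mulr1 add0r.
by rewrite mulr0 addr0 HU // /central_blade (negbTE A0) (negbTE AT) andbF.
Qed.

Lemma invertible_neq0 U : cinvertible eta U -> U != 0.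
Proof. by case=> V [HUV _]; apply: contra_neq cone_neq0 => U0; rewrite -HUV U0 cmul0l. Qed.

Lemma sc_invertible a : a != 0 -> cinvertible eta (sc a).
Proof.
by move=> a0; exists (sc a^-1); rewrite !cmul_scl /sc !scalerA mulVf ?mulfV // scale1r.
Qed.

Lemma sc_invertible_neq0 a : cinvertible eta (sc a) -> a != 0.
Proof. by move/invertible_neq0; apply: contraNneq => ->; rewrite /sc scale0r. Qed.

Lemma scale_invertible a U : a != 0 -> cinvertible eta U -> cinvertible eta (a *: U).
Proof.
move=> a0 [V [HUV HVU]]; exists (a^-1 *: V).
by split; rewrite cmulZl cmulZr ?HUV ?HVU !scalerA ?mulVf ?mulfV // scale1r.
Qed.

Lemma invertible_of_norm U k :
  crev U ** U = sc k -> U ** crev U = sc k -> k != 0 -> cinvertible eta U.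
Proof.
move=> HL HR k0; exists (k^-1 *: crev U).
by split; rewrite ?cmulZl ?cmulZr ?HL ?HR /sc !scalerA mulVf // scale1r.
Qed.

Lemma inv_mul U V : cinvertible eta U -> cinvertible eta V -> cinvertible eta (U ** V).
Proof.
move=> [U' [HU1 HU2]] [V' [HV1 HV2]]; exists (V' ** U'); split.
  by rewrite cmulA -(cmulA V) HV1 cmul1l.
by rewrite cmulA -(cmulA U') HU2 cmul1l.
Qed.

Lemma rev_norm_neq0 U k : cinvertible eta U -> crev U ** U = sc k -> k != 0.
Proof.
move=> HU Hk; apply: contraTneq (invertible_neq0 HU) => k0.
have [V [HUV _]] := HU.
have rU0 : crev U = 0 by rewrite -(cmul1r (crev U)) -HUV -cmulA Hk k0 /sc scale0r cmul0l.
by rewrite negbK -[U]crevK rU0 crev0.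
Qed.
End CliffordAlgebra.
Arguments sc {F n} a.
Arguments cmulA {F n eta}.
Arguments blade {F n} B.
Arguments center_pseudoscalar {F n}.

Section LowDimension.
Variables (F : fieldType) (n : nat) (eta : 'I_n -> F).
Implicit Types (U V W S T : clif F n) (A : {set 'I_n}).
Local Notation "U ** V" := (cmul eta U V) (at level 40, left associativity).
Local Notation one := (@cone F n).

Hypothesis two_neq0 : (2 : F) != 0.
Hypotheses (n_ge2 : (2 <= n)%N) (n_le3 : (n <= 3)%N).
Hypothesis crevM : forall U V, crev (U ** V) = crev V ** crev U.
Hypothesis rev_norm_sc : forall U, homogeneous U ->
  crev U ** U = sc (rev_norm eta U) /\ U ** crev U = sc (rev_norm eta U).
Hypothesis center_comm : forall W U, in_center W -> W ** U = U ** W.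
Hypothesis center_mul : forall W V, in_center W -> in_center V -> in_center (W ** V).

Lemma crev_invertible U : cinvertible eta U -> cinvertible eta (crev U).
Proof.
by case=> V [HUV HVU]; exists (crev V); rewrite -!crevM HUV HVU cone_sc crev_sc.
Qed.

(* Since 2 <= n, a vector e_a is neither e nor the pseudoscalar, so central elements
   have no vector part. *)
Lemma center_vector U A : in_center U -> #|A| = 1%N -> U A = 0.
Proof.
move=> /in_centerP HU A1; apply: HU.
have A0 : A != set0 by rewrite -card_gt0 A1.
have AT : A != setT by apply: contra_eqN A1 => /eqP ->; rewrite cardsT card_ord; lia.
by rewrite /central_blade (negbTE A0) (negbTE AT) andbF.
Qed.

(* Since n <= 3, an odd element without vector part lives on the pseudoscalar e_(setT):
   it is central and reversion negates it. *)
Lemma odd_without_vectors U : odd_elt U -> (forall A, #|A| = 1%N -> U A = 0) ->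
  in_center U /\ crev U = - U.
Proof.
move=> Uodd Uvec.
have supp A : U A != 0 -> #|A| = 3%N.
  move=> UA; have Alen : (#|A| <= 3)%N.
    by apply: leq_trans n_le3; rewrite -[n in (_ <= n)%N]card_ord max_card.
  have Aodd : odd #|A| by apply: contraNT UA => /Uodd ->.
  have A1 : #|A| != 1%N by apply: contraNneq UA => /Uvec ->.
  by move: Alen Aodd A1; case: #|A| => [|[|[|[|k]]]].
split.
  apply/in_centerP => A; apply: contraNeq => /supp A3.
  have AT : A = setT by apply/eqP; rewrite eqEcard subsetT cardsT card_ord A3.
  have n_odd : odd n by move: A3; rewrite AT cardsT card_ord => ->.
  by rewrite /central_blade AT n_odd eqxx orbT.
apply/ffunP => A; rewrite crevE ffunE; have [->|/supp ->] := eqVneq (U A) 0.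
  by rewrite mulr0 oppr0.
by rewrite -signr_odd mulN1r.
Qed.

(* Key factorisation: if S is homogeneous with non-zero norm s and rev(S) R = Z is
   central, then R = s^-1 Z S, so S + R = (e + s^-1 Z) S is a central multiple of S. *)
Lemma inP_of_split S R : homogeneous S -> rev_norm eta S != 0 ->
  in_center (crev S ** R) -> cinvertible eta (S + R) -> inP eta (S + R).
Proof.
move=> HS s0 HZ HT; set s := rev_norm eta S in s0; set Z := crev S ** R in HZ.
have [HSl HSr] := rev_norm_sc HS.
have HR : R = s^-1 *: (Z ** S).
  by rewrite (center_comm S HZ) -cmulA HSr cmul_scl scalerA mulVf // scale1r.
pose W := one + s^-1 *: Z.
have HTW : S + R = W ** S by rewrite cmulDl cmul1l cmulZl -HR.
have HSi : cinvertible eta S := invertible_of_norm HSl HSr s0.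
have HWi : cinvertible eta W.
  have -> : W = (S + R) ** (s^-1 *: crev S).
    by rewrite HTW cmulA cmulZr HSr /sc scalerA mulVf // scale1r cmul1r.
  by apply: inv_mul => //; apply: scale_invertible; rewrite ?invr_eq0 //; apply: crev_invertible.
exists W, S; split; last by [].
by split => //; apply: center_add; [apply: center_cone | apply: center_scale].
Qed.

(* A is contained in P.  Write T = E + O (even and odd parts) and Y = rev(E) O, which is odd.
   The vector part of rev(T) T is 2 Y, so Y is pseudoscalar, hence central with rev(Y) = -Y;
   then rev(T) T is the scalar N(E) + N(O), and one of the two norms is non-zero. *)
Lemma A_sub_P T : inA eta T -> inP eta T.
Proof.
move=> [HT [HKc HKi]].
set E := even_part T; set O := odd_part T; set Y := crev E ** O.
have HE : homogeneous E by left; apply: even_part_even.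
have HO : homogeneous O by right; apply: odd_part_odd.
have HK : crev T ** T = sc (rev_norm eta E) + Y + (crev Y + sc (rev_norm eta O)).
  rewrite {1 2}(even_odd_split T) -/E -/O crevD cmulDl !cmulDr.
  by rewrite (rev_norm_sc HE).1 (rev_norm_sc HO).1 crevM crevK.
have Yodd : odd_elt Y by apply: cmul_even_odd; [apply/crev_even/even_part_even | apply: odd_part_odd].
have Yvec A : #|A| = 1%N -> Y A = 0.
  move=> A1; have := center_vector HKc A1.
  rewrite HK !clifDE crevE !scE -cards_eq0 A1 /= mul1r add0r addr0 -mulr2n -mulr_natl.
  by move/eqP; rewrite mulf_eq0 (negbTE two_neq0) => /eqP.
have [YZ Yrev] := odd_without_vectors Yodd Yvec.
have HKs : crev T ** T = sc (rev_norm eta E + rev_norm eta O).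
  by rewrite HK Yrev addrA addrK /sc scalerDl.
have k0 : rev_norm eta E + rev_norm eta O != 0 by move: HKi; rewrite HKs; apply: sc_invertible_neq0.
rewrite [T]even_odd_split -/E -/O.
have [E0|E0] := eqVneq (rev_norm eta E) 0.
  rewrite addrC; apply: inP_of_split => //; first by rewrite E0 add0r in k0.
    by rewrite -(crevK E) -crevM -/Y Yrev -scaleN1r; apply: center_scale.
  by rewrite addrC -even_odd_split.
by apply: inP_of_split; rewrite // -even_odd_split.
Qed.

Lemma P_invertible T : inP eta T -> cinvertible eta T.
Proof. by move=> [W [S [[_ HWi] [HSi [_ ->]]]]]; apply: inv_mul. Qed.

(* P is contained in Q: for T = W S, rev(T) T = rev(S) (rev(W) W) S = N(S) rev(W) W,
   a non-zero multiple of the central unit rev(W) W. *)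
Lemma P_sub_Q T : inP eta T -> center_unit eta (crev T ** T).
Proof.
move=> [W [S [[HWc HWi] [HSi [HS ->]]]]].
have HMc : in_center (crev W ** W) by apply: center_mul => //; apply: center_crev.
have HMi : cinvertible eta (crev W ** W) by apply: inv_mul => //; apply: crev_invertible.
have HSl := (rev_norm_sc HS).1.
have -> : crev (W ** S) ** (W ** S) = rev_norm eta S *: (crev W ** W).
  by rewrite crevM cmulA -(cmulA (crev W)) (center_comm S HMc) -cmulA HSl cmul_scl.
split; first exact: center_scale.
by apply: scale_invertible => //; apply: rev_norm_neq0 HSl.
Qed.

Theorem low_dim_AQP :
  (forall T, inA eta T <-> inQ eta T) /\ (forall T, inQ eta T <-> inP eta T).
Proof.
split=> T; split.
- by move=> HA; split; [apply: A_sub_P | case: HA].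
- by move=> [HP HK]; split; first apply: P_invertible.
- by case.
- by move=> HP; split; last apply: P_sub_Q.
Qed.
End LowDimension.

Section EvenDimension.
Variables (F : fieldType) (n : nat) (eta : 'I_n -> F) (s : {set 'I_n}).
Local Notation "U ** V" := (cmul eta U V) (at level 40, left associativity).
Local Notation one := (@cone F n).
Hypothesis s3 : #|s| = 3%N.

Definition span_es (a b : F) : clif F n := a *: one + b *: blade s.

Lemma span_esE a b A : span_es a b A = a * (A == set0)%:R + b * (A == s)%:R.
Proof. by rewrite clifDE !clifZE cone_blade !bladeE. Qed.

Lemma cmul_span_es a b a' b' : span_es a b ** span_es a' b' =
  span_es (a * a' + b * b' * blade_coef eta s s) (a * b' + b * a').
Proof.
rewrite /span_es cmulDl !cmulDr !cmulZl !cmulZr !cmul1l cmul1r cmul_blade symdd -cone_blade.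
by apply/ffunP => A; rewrite !clifDE !clifZE; ring.
Qed.

Lemma crev_span_es a b : crev (span_es a b) = span_es a (- b).
Proof.
rewrite /span_es crevD !crevZ crev_blade s3 cone_sc crev_sc -cone_sc scalerA.
by rewrite -signr_odd /= mulrN1.
Qed.

(* For even n, T = 2 e + e_s lies in A but not in Q: rev(T) T = 4 - e_s^2 is a non-zero
   scalar, while the center is scalar and T is neither even nor odd. *)
Theorem Q_neq_A_even_dim : (2 : F) != 0 -> ~~ odd n -> blade_coef eta s s != 4 ->
  ~ (forall T, inQ eta T <-> inA eta T).
Proof.
move=> two0 n_even c4; set k := 4 - blade_coef eta s s.
have k0 : k != 0 by rewrite subr_eq0 eq_sym.
have span_sc x y : x = k -> y = 0 -> span_es x y = sc k.
  by move=> -> ->; rewrite /span_es scale0r addr0.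
set T := span_es 2 1.
have [HL HR] : crev T ** T = sc k /\ T ** crev T = sc k.
  by rewrite crev_span_es !cmul_span_es; split; apply: span_sc; rewrite /k; ring.
have TA : inA eta T.
  by split; [apply: invertible_of_norm HL HR k0 | rewrite HL; split; [apply: center_sc | apply: sc_invertible]].
move=> /(_ T) /proj2 /(_ TA) [[W [S [[/(center_even_dim n_even) HW _] [_ [HS HT]]]]] _].
have s0 : (s == set0) = false by rewrite -cards_eq0 s3.
have T0 : T set0 = 2 by rewrite span_esE eqxx eq_sym s0 mulr1 mulr0 addr0.
have Ts : T s = 1 by rewrite span_esE s0 eqxx mulr0 mulr1 add0r.
rewrite HT HW cmul_scl !clifZE in T0 Ts.
case: HS => [Se|So].
  by move: Ts; rewrite Se ?s3 // mulr0 => /eqP; rewrite eq_sym oner_eq0.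
by move: T0; rewrite So ?cards0 // mulr0 => /eqP; rewrite eq_sym (negbTE two0).
Qed.
End EvenDimension.

(* Computations in dimensions 2 and 3: a blade is encoded by its indicator bits, sums over
   blades become iterated sums over bits, and every coordinate identity reduces to a
   polynomial identity checked by ring. *)
Section Bits.
Variable F : fieldType.
Definition sgn (b : bool) : F := if b then -1 else 1.
Definition ifeta (b : bool) (x : F) : F := if b then x else 1.
End Bits.
Arguments sgn {F} b.
Arguments ifeta {F} b x.

Section Dimension2.
Variables (F : fieldType) (eta : 'I_2 -> F).
Implicit Types (U V : clif F 2).
Local Notation "U ** V" := (cmul eta U V) (at level 40, left associativity).

Definition j0 : 'I_2 := @Ordinal 2 0 isT.
Definition j1 : 'I_2 := @Ordinal 2 1 isT.

Definition sb2 (a0 a1 : bool) : {set 'I_2} := [set i : 'I_2 | nth false [:: a0; a1] i].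

Lemma in_sb2 a0 a1 i : (i \in sb2 a0 a1) = nth false [:: a0; a1] i.
Proof. by rewrite inE. Qed.

Lemma sb2_bits (A : {set 'I_2}) : A = sb2 (j0 \in A) (j1 \in A).
Proof.
by apply/setP => i; rewrite in_sb2; case: i => [[|[|//]] Hi] /=; congr (_ \in A); apply: val_inj.
Qed.

Lemma sum_sb2 (G : {set 'I_2} -> F) :
  \sum_(A : {set 'I_2}) G A = \sum_(a0 : bool) \sum_(a1 : bool) G (sb2 a0 a1).
Proof.
rewrite (reindex (fun p : bool * bool => sb2 p.1 p.2)) /=; last first.
  exists (fun A : {set 'I_2} => (j0 \in A, j1 \in A)) => [[a0 a1] _|A _] /=.
    by rewrite !in_sb2.
  by rewrite -sb2_bits.
by rewrite -(pair_bigA _ (fun (i : bool) (j : bool) => G (sb2 i j))).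
Qed.

Lemma clif_eq2 U V : (forall a0 a1, U (sb2 a0 a1) = V (sb2 a0 a1)) -> U = V.
Proof. by move=> H; apply/ffunP => A; rewrite (sb2_bits A); apply: H. Qed.

Lemma card_sb2 a0 a1 : #|sb2 a0 a1| = (a0 + a1)%N.
Proof. by rewrite -sum1_card big_mkcond !big_ord_recr big_ord0 /= !in_sb2 /=; case: a0; case: a1. Qed.

Lemma sb2_eq0 a0 a1 : (sb2 a0 a1 == set0) = ~~ (a0 || a1).
Proof. by rewrite -cards_eq0 card_sb2; case: a0; case: a1. Qed.

Lemma symd_sb2 a0 a1 b0 b1 : symd (sb2 a0 a1) (sb2 b0 b1) = sb2 (a0 (+) b0) (a1 (+) b1).
Proof.
apply/setP => i; rewrite /symd !inE.
by case: i => [[|[|//]] Hi] /=; [case: a0; case: b0|case: a1; case: b1].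
Qed.

Lemma blade_coef_sb2 a0 a1 b0 b1 :
  blade_coef eta (sb2 a0 a1) (sb2 b0 b1) =
  sgn (a1 && b0) * (ifeta (a0 && b0) (eta j0) * ifeta (a1 && b1) (eta j1)).
Proof.
rewrite /blade_coef inv_countE prod_metricE !big_ord_recr !big_ord0 /= !in_sb2 /=.
have -> : widen_ord (leqnSn 1) ord_max = j0 by apply: val_inj.
have -> : ord_max = j1 by apply: val_inj.
rewrite -signr_odd !oddD.
by case: a0; case: a1; case: b0; case: b1; rewrite /sgn /ifeta /= ?expr0 ?expr1 ?mul1r ?mulr1.
Qed.

Lemma cmul_sb2 U V c0 c1 :
  (U ** V) (sb2 c0 c1) = \sum_(a0 : bool) \sum_(a1 : bool)
    U (sb2 a0 a1) * V (sb2 (a0 (+) c0) (a1 (+) c1)) *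
    blade_coef eta (sb2 a0 a1) (sb2 (a0 (+) c0) (a1 (+) c1)).
Proof.
by rewrite cmulE sum_sb2; apply: eq_bigr => a0 _; apply: eq_bigr => a1 _; rewrite symd_sb2.
Qed.

Lemma crev_sb2 U a0 a1 : crev U (sb2 a0 a1) = sgn (a0 && a1) * U (sb2 a0 a1).
Proof. by rewrite crevE card_sb2 -signr_odd; case: a0; case: a1. Qed.

Ltac expand2 := rewrite ?crev_sb2 ?cmul_sb2 ?big_bool /= ?crev_sb2 ?cmul_sb2 ?big_bool /=
  ?even_partE ?odd_partE ?scE ?sb2_eq0 ?card_sb2 /= ?blade_coef_sb2 /sgn /ifeta /=.
Ltac coords2 := apply: clif_eq2; case; case.

Lemma crevM2 U V : crev (U ** V) = crev V ** crev U.
Proof. by coords2; expand2; ring. Qed.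

Lemma rev_norm2 U : homogeneous U ->
  crev U ** U = sc (rev_norm eta U) /\ U ** crev U = sc (rev_norm eta U).
Proof.
rewrite /rev_norm (_ : set0 = sb2 false false); last by apply/esym/eqP; rewrite sb2_eq0.
by case=> [/even_part_id|/odd_part_id] <-; split; coords2; expand2; ring.
Qed.
End Dimension2.

Section Dimension3.
Variables (F : fieldType) (eta : 'I_3 -> F).
Implicit Types (U V W X : clif F 3).
Local Notation "U ** V" := (cmul eta U V) (at level 40, left associativity).

Definition i0 : 'I_3 := @Ordinal 3 0 isT.
Definition i1 : 'I_3 := @Ordinal 3 1 isT.
Definition i2 : 'I_3 := @Ordinal 3 2 isT.

Definition sb3 (a0 a1 a2 : bool) : {set 'I_3} := [set i : 'I_3 | nth false [:: a0; a1; a2] i].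

Lemma in_sb3 a0 a1 a2 i : (i \in sb3 a0 a1 a2) = nth false [:: a0; a1; a2] i.
Proof. by rewrite inE. Qed.

Lemma sb3_bits (A : {set 'I_3}) : A = sb3 (i0 \in A) (i1 \in A) (i2 \in A).
Proof.
by apply/setP => i; rewrite in_sb3; case: i => [[|[|[|//]]] Hi] /=; congr (_ \in A); apply: val_inj.
Qed.

Lemma sum_sb3 (G : {set 'I_3} -> F) :
  \sum_(A : {set 'I_3}) G A = \sum_(a0 : bool) \sum_(a1 : bool) \sum_(a2 : bool) G (sb3 a0 a1 a2).
Proof.
rewrite (reindex (fun p : bool * bool * bool => sb3 p.1.1 p.1.2 p.2)) /=; last first.
  exists (fun A : {set 'I_3} => (i0 \in A, i1 \in A, i2 \in A)) => [[[a0 a1] a2] _|A _] /=.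
    by rewrite !in_sb3.
  by rewrite -sb3_bits.
rewrite -(pair_bigA _ (fun (i : bool * bool) (j : bool) => G (sb3 i.1 i.2 j))) /=.
by rewrite -(pair_bigA _ (fun i j => \sum_(k : bool) G (sb3 i j k))).
Qed.

Lemma clif_eq3 U V : (forall a0 a1 a2, U (sb3 a0 a1 a2) = V (sb3 a0 a1 a2)) -> U = V.
Proof. by move=> H; apply/ffunP => A; rewrite (sb3_bits A); apply: H. Qed.

Lemma card_sb3 a0 a1 a2 : #|sb3 a0 a1 a2| = (a0 + a1 + a2)%N.
Proof.
rewrite -sum1_card big_mkcond !big_ord_recr big_ord0 /= !in_sb3 /=.
by case: a0; case: a1; case: a2.
Qed.

Lemma sb3_eq0 a0 a1 a2 : (sb3 a0 a1 a2 == set0) = ~~ [|| a0, a1 | a2].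
Proof. by rewrite -cards_eq0 card_sb3; case: a0; case: a1; case: a2. Qed.

Lemma symd_sb3 a0 a1 a2 b0 b1 b2 :
  symd (sb3 a0 a1 a2) (sb3 b0 b1 b2) = sb3 (a0 (+) b0) (a1 (+) b1) (a2 (+) b2).
Proof.
apply/setP => i; rewrite /symd !inE.
by case: i => [[|[|[|//]]] Hi] /=; [case: a0; case: b0|case: a1; case: b1|case: a2; case: b2].
Qed.

Lemma blade_coef_sb3 a0 a1 a2 b0 b1 b2 :
  blade_coef eta (sb3 a0 a1 a2) (sb3 b0 b1 b2) =
  sgn ((a1 && b0) (+) (a2 && b0) (+) (a2 && b1)) *
  (ifeta (a0 && b0) (eta i0) * ifeta (a1 && b1) (eta i1) * ifeta (a2 && b2) (eta i2)).
Proof.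
rewrite /blade_coef inv_countE prod_metricE !big_ord_recr !big_ord0 /= !in_sb3 /=.
have -> : widen_ord (leqnSn 2) (widen_ord (leqnSn 1) ord_max) = i0 by apply: val_inj.
have -> : widen_ord (leqnSn 2) ord_max = i1 by apply: val_inj.
have -> : ord_max = i2 by apply: val_inj.
rewrite -signr_odd !oddD.
by case: a0; case: a1; case: a2; case: b0; case: b1; case: b2;
  rewrite /sgn /ifeta /= ?expr0 ?expr1 ?mul1r ?mulr1.
Qed.

Lemma cmul_sb3 U V c0 c1 c2 :
  (U ** V) (sb3 c0 c1 c2) = \sum_(a0 : bool) \sum_(a1 : bool) \sum_(a2 : bool)
    U (sb3 a0 a1 a2) * V (sb3 (a0 (+) c0) (a1 (+) c1) (a2 (+) c2)) *
    blade_coef eta (sb3 a0 a1 a2) (sb3 (a0 (+) c0) (a1 (+) c1) (a2 (+) c2)).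
Proof.
rewrite cmulE sum_sb3; apply: eq_bigr => a0 _; apply: eq_bigr => a1 _; apply: eq_bigr => a2 _.
by rewrite symd_sb3.
Qed.

Lemma crev_sb3 U a0 a1 a2 :
  crev U (sb3 a0 a1 a2) = sgn [|| a0 && a1, a0 && a2 | a1 && a2] * U (sb3 a0 a1 a2).
Proof. by rewrite crevE card_sb3 -signr_odd; case: a0; case: a1; case: a2. Qed.

Lemma sb3_eqT a0 a1 a2 : (sb3 a0 a1 a2 == setT) = [&& a0, a1 & a2].
Proof. by rewrite eqEcard subsetT cardsT card_ord card_sb3; case: a0; case: a1; case: a2. Qed.

Ltac expand3 := rewrite ?crev_sb3 ?cmul_sb3 ?big_bool /= ?crev_sb3 ?cmul_sb3 ?big_bool /=
  ?even_partE ?odd_partE ?scE ?bladeE ?sb3_eq0 ?sb3_eqT ?card_sb3 /= ?blade_coef_sb3 /sgn /ifeta /=.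
Ltac coords3 := apply: clif_eq3; case; case; case.

Lemma crevM3 U V : crev (U ** V) = crev V ** crev U.
Proof. by coords3; expand3; ring. Qed.

Lemma rev_norm3 U : homogeneous U ->
  crev U ** U = sc (rev_norm eta U) /\ U ** crev U = sc (rev_norm eta U).
Proof.
rewrite /rev_norm (_ : set0 = sb3 false false false); last by apply/esym/eqP; rewrite sb3_eq0.
by case=> [/even_part_id|/odd_part_id] <-; split; coords3; expand3; ring.
Qed.

Lemma pseudoscalar_comm3 U : blade setT ** U = U ** blade setT.
Proof. by coords3; expand3; ring. Qed.

Lemma pseudoscalar_sq3 : blade setT ** blade setT = sc (- (eta i0 * eta i1 * eta i2)).
Proof. by coords3; expand3; ring. Qed.

Lemma center_comm3 W U : in_center W -> W ** U = U ** W.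
Proof.
move=> /(center_odd_dim (n := 3) isT) ->.
by rewrite cmulDl cmulDr cmul_scl cmul_scr cmulZl cmulZr pseudoscalar_comm3.
Qed.

Lemma center_mul3 W V : in_center W -> in_center V -> in_center (W ** V).
Proof.
move=> /(center_odd_dim (n := 3) isT) -> /(center_odd_dim (n := 3) isT) ->.
rewrite !cmulDl !cmulDr !cmul_scl !cmul_scr !cmulZl !cmulZr pseudoscalar_sq3.
have Hps : in_center (blade setT : clif F 3) := center_pseudoscalar (n := 3) isT.
by repeat apply: center_add; repeat apply: center_scale; rewrite //; apply: center_cone.
Qed.
End Dimension3.

Corollary AQP_dim2 (F : fieldType) (eta : 'I_2 -> F) : (2 : F) != 0 ->
  (forall T, inA eta T <-> inQ eta T) /\ (forall T, inQ eta T <-> inP eta T).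
Proof.
move=> two0; apply: low_dim_AQP => //.
- exact: crevM2.
- exact: rev_norm2.
- by move=> W U; apply: center_comm_even_dim.
- by move=> W V; apply: center_mul_even_dim.
Qed.

Corollary AQP_dim3 (F : fieldType) (eta : 'I_3 -> F) : (2 : F) != 0 ->
  (forall T, inA eta T <-> inQ eta T) /\ (forall T, inQ eta T <-> inP eta T).
Proof.
move=> two0; apply: low_dim_AQP => //.
- exact: crevM3.
- exact: rev_norm3.
- exact: center_comm3.
- exact: center_mul3.
Qed.

Definition s012 : {set 'I_4} := [set i : 'I_4 | (i < 3)%N].

Corollary Q_neq_A_dim4 (F : fieldType) (eta : 'I_4 -> F) :
  (2 : F) != 0 -> blade_coef eta s012 s012 != 4 -> ~ (forall T, inQ eta T <-> inA eta T).
Proof.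
move=> two0 c4; apply: Q_neq_A_even_dim two0 _ c4 => //.
by rewrite -sum1_card big_mkcond !big_ord_recr big_ord0 /= !inE.
Qed.

Lemma blade_coef_pm1 (F : fieldType) (n : nat) (eta : 'I_n -> F) A B :
  (forall i, eta i = 1 \/ eta i = -1) ->
  blade_coef eta A B = 1 \/ blade_coef eta A B = -1.
Proof.
move=> eta_pm1; rewrite /blade_coef -signr_odd.
have : \prod_(i in A :&: B) eta i = 1 \/ \prod_(i in A :&: B) eta i = -1.
  elim/big_ind: _ => [|x y [->|->] [->|->]|i _]; rewrite ?mulr1 ?mulrN1 ?opprK; by [left|right|].
by case: (odd _) => -[->|->]; rewrite ?mul1r ?mulN1r ?opprK; by [left|right].
Qed.

Lemma pm1_neq4 (R : numDomainType) (x : R) : x = 1 \/ x = -1 -> x != 4.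
Proof.
by case=> ->; rewrite ?eqr_oppLR -?addr_eq0 -[1]/(1%:R) ?eqr_nat // -natrD pnatr_eq0.
Qed.

Lemma two_neq0 (R : numDomainType) : (2 : R) != 0.
Proof. by rewrite pnatr_eq0. Qed.

Theorem mainTheorem15 (R : realType) :
  (* real case, 2 <= n <= 3 *)
  (forall p q : nat, (2 <= p + q <= 3)%N ->
     (forall T, inA (eta_pq R p q) T <-> inQ (eta_pq R p q) T) /\
     (forall T, inQ (eta_pq R p q) T <-> inP (eta_pq R p q) T)) /\
  (* complex case, 2 <= n <= 3 *)
  (forall n : nat, (2 <= n <= 3)%N ->
     (forall T, inA (eta_C R n) T <-> inQ (eta_C R n) T) /\
     (forall T, inQ (eta_C R n) T <-> inP (eta_C R n) T)) /\
  (* real case, n = 4: Q <> A *)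
  (forall p q : nat, (p + q = 4)%N ->
     ~ (forall T, inQ (eta_pq R p q) T <-> inA (eta_pq R p q) T)) /\
  (* complex case, n = 4: Q <> A *)
  ~ (forall T, inQ (eta_C R 4) T <-> inA (eta_C R 4) T).
Proof.
have eta_pq_pm1 p q i : eta_pq R p q i = 1 \/ eta_pq R p q i = -1.
  by rewrite /eta_pq; case: ifP; [left|right].
split; [|split; [|split]].
- move=> p q Hpq; move: (eta_pq R p q); have [->|->] : (p + q = 2 \/ p + q = 3)%N by lia.
    by move=> eta; apply: AQP_dim2 (two_neq0 R).
  by move=> eta; apply: AQP_dim3 (two_neq0 R).
- move=> n Hn; have [->|->] : (n = 2 \/ n = 3)%N by lia.
    exact: AQP_dim2 (two_neq0 _).
  exact: AQP_dim3 (two_neq0 _).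
- move=> p q Hpq; move: (eta_pq R p q) (eta_pq_pm1 p q); rewrite Hpq => eta eta_pm1.
  by apply: Q_neq_A_dim4 (two_neq0 R) _; apply/pm1_neq4/blade_coef_pm1.
- apply: Q_neq_A_dim4 (two_neq0 _) _; apply/pm1_neq4/blade_coef_pm1.
  by move=> i; left.
Qed.
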